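(* Let $\mathcal{U}_s=\{{\bf U}\in\mathbb{C}^{n\times n}:{\bf U}{\bf U}^H={\bf I}_n,\ {\bf U}={\bf U}^T\}$. For a complex symmetric matrix ${\bf A}={\bf A}^T\in\mathbb{C}^{n\times n}$ with Takagi factorization ${\bf A}={\bf Q}\boldsymbol{\Sigma}{\bf Q}^T$, define $\Pi({\bf A})={\bf Q}{\bf Q}^T$. Then $\Pi({\bf A})\in\mathcal{U}_s$ and $\Pi({\bf A})$ is a unitary symmetric matrix closest to ${\bf A}$ in Frobenius norm, i.e. $\|{\bf A}-\Pi({\bf A})\|_F=\min_{{\bf U}\in\mathcal{U}_s}\|{\bf A}-{\bf U}\|_F$ (if there are several minimizers, $\Pi({\bf A})$ is one of them).
   Context: Takagi factorization: every complex symmetric ${\bf A}={\bf A}^T\in\mathbb{C}^{n\times n}$ can be written as ${\bf A}={\bf Q}\boldsymbol{\Sigma}{\bf Q}^T$ where ${\bf Q}$ is an $n\times n$ unitary matrix and $\boldsymbol{\Sigma}=\operatorname{diag}(\sigma_1,\ldots,\sigma_n)$ with $\sigma_1\ge\cdots\ge\sigma_n\ge 0$. $\|\cdot\|_F$ is the Frobenius norm. *)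

(* complex numbers are R[i] = complex R over a real closed
   field R (mathcomp-real-closed); the usual C is the case R = reals. *)
From HB Require Import structures.
From mathcomp Require Import all_boot all_order all_algebra.
From mathcomp Require Import complex.
Set Implicit Arguments. Unset Strict Implicit. Unset Printing Implicit Defensive.
Import Order.TTheory GRing.Theory Num.Theory.
Local Open Scope ring_scope.
Local Open Scope complex_scope.

Definition ctrmx (R : rcfType) (m n : nat) (A : 'M[R[i]]_(m, n)) : 'M[R[i]]_(n, m) :=
  map_mx (@conjc R) A^T.

Definition frob (R : rcfType) (m n : nat) (A : 'M[R[i]]_(m, n)) : R :=
  Num.sqrt (\sum_(i < m) \sum_(j < n) (complex.Re (A i j) ^+ 2 + complex.Im (A i j) ^+ 2)).

Definition unitary (R : rcfType) (n : nat) (U : 'M[R[i]]_n) : Prop :=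
  U *m ctrmx U = 1%:M.

Definition unitary_sym (R : rcfType) (n : nat) (U : 'M[R[i]]_n) : Prop :=
  U *m ctrmx U = 1%:M /\ U = U^T.

Definition takagi (R : rcfType) (n : nat) (A Q : 'M[R[i]]_n) (s : 'rV[R]_n) : Prop :=
  [/\ unitary Q,
      (forall k : 'I_n, 0 <= s 0 k),
      (forall k l : 'I_n, (k <= l)%N -> s 0 l <= s 0 k)
    & A = Q *m diag_mx (map_mx (fun x : R => x%:C) s) *m Q^T].

(* Write ||X||^2 = Re tr (X X^H).  For a unitary U,
   ||A - U||^2 = ||A||^2 + n - 2 Re tr (A U^H), so the closest unitary matrix
   maximises Re tr (A U^H).  With A = Q S Q^T this trace equals
   tr (S W) for the unitary W = Q^T U^H Q, whose diagonal entries have real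
   part at most 1; as S is real, diagonal and nonnegative, Re tr (S W) <= tr S,
   with equality for W = 1, i.e. for U = Q Q^T. *)
From HB Require Import structures.
From mathcomp Require Import all_boot all_order all_algebra.
From mathcomp Require Import complex.
From mathcomp Require Import ring lra.
Import Order.TTheory GRing.Theory Num.Theory.
Set Implicit Arguments. Unset Strict Implicit.
Local Open Scope ring_scope.
Local Open Scope complex_scope.

Section ComplexRe.
Variable R : rcfType.

Lemma Re_real_mul (a : R) (x : R[i]) : complex.Re (a%:C * x) = a * complex.Re x.
Proof. by case: x => b c /=; ring. Qed.

Lemma Re_mulcJ (x : R[i]) :
  complex.Re (x * x^*) = complex.Re x ^+ 2 + complex.Im x ^+ 2.
Proof. by case: x => b c /=; ring. Qed.

End ComplexRe.

Section ConjugateTranspose.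
Variable R : rcfType.

Lemma ctrmxK m n (A : 'M[R[i]]_(m, n)) : ctrmx (ctrmx A) = A.
Proof. by apply/matrixP => i j; rewrite !mxE conjcK. Qed.

Lemma ctrmxM m n p (A : 'M[R[i]]_(m, n)) (B : 'M[R[i]]_(n, p)) :
  ctrmx (A *m B) = ctrmx B *m ctrmx A.
Proof. by rewrite /ctrmx trmx_mul map_mxM. Qed.

Lemma ctrmxB m n (A B : 'M[R[i]]_(m, n)) : ctrmx (A - B) = ctrmx A - ctrmx B.
Proof. by rewrite /ctrmx linearB map_mxB. Qed.

Lemma ctrmx_trmx m n (A : 'M[R[i]]_(m, n)) : ctrmx A^T = (ctrmx A)^T.
Proof. by rewrite /ctrmx map_trmx. Qed.

Lemma mxtrace_ctrmx n (A : 'M[R[i]]_n) : \tr (ctrmx A) = (\tr A)^*.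
Proof. by rewrite /ctrmx trace_map_mx mxtrace_tr. Qed.

End ConjugateTranspose.

Section Unitary.
Variables (R : rcfType) (n : nat).
Implicit Types U V : 'M[R[i]]_n.

Lemma unitary_mulC U : unitary U -> ctrmx U *m U = 1%:M.
Proof. exact: mulmx1C. Qed.

Lemma unitary_ctrmx U : unitary U -> unitary (ctrmx U).
Proof. by move=> /unitary_mulC UhU; rewrite /unitary ctrmxK. Qed.

Lemma unitary_trmx U : unitary U -> unitary U^T.
Proof.
by move=> /unitary_mulC UhU; rewrite /unitary ctrmx_trmx -trmx_mul UhU trmx1.
Qed.

Lemma unitaryM U V : unitary U -> unitary V -> unitary (U *m V).
Proof.
move=> uU uV; rewrite /unitary ctrmxM mulmxA -(mulmxA U) uV mulmx1; exact: uU.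
Qed.

Lemma unitary_Re_diag_le1 U k : unitary U -> complex.Re (U k k) <= 1.
Proof.
move=> uU; have : complex.Re ((U *m ctrmx U) k k) = 1 by rewrite uU mxE eqxx.
rewrite mxE raddf_sum (bigD1 k) //= !mxE Re_mulcJ.
have : 0 <= \sum_(j | j != k) complex.Re (U k j * (ctrmx U) j k).
  by apply: sumr_ge0 => j _; rewrite !mxE Re_mulcJ addr_ge0 ?sqr_ge0.
have := sqr_ge0 (complex.Im (U k k)); nra.
Qed.

End Unitary.

Section Frobenius.
Variables (R : rcfType) (n : nat).
Implicit Types A U : 'M[R[i]]_n.

Lemma frobE A : frob A = Num.sqrt (complex.Re (\tr (A *m ctrmx A))).
Proof.
rewrite /frob /mxtrace raddf_sum; congr Num.sqrt; apply: eq_bigr => i _.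
by rewrite mxE raddf_sum; apply: eq_bigr => j _; rewrite !mxE /= Re_mulcJ.
Qed.

Lemma Re_mxtrace_subr_unitary A U : unitary U ->
  complex.Re (\tr ((A - U) *m ctrmx (A - U))) =
  complex.Re (\tr (A *m ctrmx A)) + n%:R - 2 * complex.Re (\tr (A *m ctrmx U)).
Proof.
move=> uU; rewrite ctrmxB mulmxBl !mulmxBr !raddfB /= uU mxtrace1.
have -> : U *m ctrmx A = ctrmx (A *m ctrmx U) by rewrite ctrmxM ctrmxK.
rewrite mxtrace_ctrmx raddfMn; case: (\tr (A *m ctrmx U)) => a b /=; ring.
Qed.

Lemma Re_mxtrace_diag_unitary_le (d : 'rV[R]_n) U :
  (forall k, 0 <= d 0 k) -> unitary U ->
  complex.Re (\tr (diag_mx (map_mx (fun x : R => x%:C) d) *m U))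
  <= complex.Re (\tr (diag_mx (map_mx (fun x : R => x%:C) d))).
Proof.
move=> d_ge0 uU; rewrite mul_diag_mx /mxtrace !raddf_sum; apply: ler_sum => k _.
rewrite !mxE eqxx mulr1n /= Re_real_mul.
by rewrite -[leRHS]mulr1 ler_wpM2l ?unitary_Re_diag_le1.
Qed.

End Frobenius.

Section Takagi.
Variables (R : rcfType) (n : nat) (A Q : 'M[R[i]]_n) (s : 'rV[R]_n).
Hypothesis takagiA : takagi A Q s.

Lemma unitary_takagi_mulmx_tr : unitary (Q *m Q^T).
Proof. case: takagiA => uQ _ _ _; exact: unitaryM uQ (unitary_trmx uQ). Qed.

Lemma takagi_mxtrace_mulmx V :
  \tr (A *m V) = \tr (diag_mx (map_mx (fun x : R => x%:C) s) *m (Q^T *m V *m Q)).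
Proof.
case: takagiA => _ _ _ ->.
by rewrite -!mulmxA mxtrace_mulC -!mulmxA mxtrace_mulC !mulmxA.
Qed.

Lemma takagi_unitary_closest U :
  unitary U -> frob (A - Q *m Q^T) <= frob (A - U).
Proof.
case: (takagiA) => uQ s_ge0 _ _ uU.
have uQQt := unitary_takagi_mulmx_tr.
have uW : unitary (Q^T *m ctrmx U *m Q).
  by apply: unitaryM => //; exact: unitaryM (unitary_trmx uQ) (unitary_ctrmx uU).
rewrite !frobE ler_wsqrtr // !Re_mxtrace_subr_unitary //.
suff : complex.Re (\tr (A *m ctrmx U))
       <= complex.Re (\tr (A *m ctrmx (Q *m Q^T))) by lra.
rewrite !takagi_mxtrace_mulmx.
have -> : Q^T *m ctrmx (Q *m Q^T) *m Q = 1%:M.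
  rewrite ctrmxM ctrmx_trmx !mulmxA -trmx_mul (unitary_mulC uQ) trmx1 mul1mx.
  exact: unitary_mulC.
by rewrite mulmx1 Re_mxtrace_diag_unitary_le.
Qed.

End Takagi.

Theorem proposition2 (R : rcfType) (n : nat) (A Q : 'M[R[i]]_n) (s : 'rV[R]_n) :
  A^T = A -> takagi A Q s ->
  unitary_sym (Q *m Q^T) /\
  (forall U : 'M[R[i]]_n, unitary_sym U -> frob (A - Q *m Q^T) <= frob (A - U)).
Proof.
(* The symmetry of A is already implied by its Takagi factorization. *)
move=> _ takagiA; split.
  by split; [exact: (unitary_takagi_mulmx_tr takagiA) | rewrite trmx_mul trmxK].
by move=> U [uU _]; exact: takagi_unitary_closest takagiA U uU.
Qed.
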